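(* With all notation as in the context, for every right coset $\tau\in G\backslash H$ and every $\alpha\in Q$ one has $$\gamma_1(\alpha\cdot\tau)=m(\alpha)\cdot\gamma_1(\tau).$$ In particular, the action of $Q$ on the blue $L$ cosets $\mathscr{O}_1$, and on the red $L$ cosets $\mathscr{O}_2$, is isomorphic (via $m$ and $\gamma_1$) to the action of $H_1$ on $G_L\backslash H_1$, and the action of $Q$ on the $J$ cosets $\mathscr{O}_3$ is isomorphic (via $m$ and $\gamma_1$) to the action of $H_1$ on $G_J\backslash H_1$.
   Context: Group $H$ side. Let $W=\{(a,b,c,d,e,f,g,h)^T\in\mathbb{C}^8: 2+3a=b+c+d+e+f+g+h\}$; a transposition $(ij)$ denotes the permutation matrix swapping coordinates $i,j$. Let $X\in GL(8,\mathbb{C})$ be the matrix with rows $(\tfrac12,\tfrac12,-\tfrac12,-\tfrac12,-\tfrac12,\tfrac12,\tfrac12,\tfrac12)$, $e_2$, $(-\tfrac12,\tfrac12,\tfrac12,-\tfrac12,-\tfrac12,\tfrac12,\tfrac12,\tfrac12)$, $(-\tfrac12,\tfrac12,-\tfrac12,\tfrac12,-\tfrac12,\tfrac12,\tfrac12,\tfrac12)$, $(-\tfrac12,\tfrac12,-\tfrac12,-\tfrac12,\tfrac12,\tfrac12,\tfrac12,\tfrac12)$, $e_6,e_7,e_8$, and $Y$ the matrix with rows $(-1,2,0,\dots,0)$, $(-1,1,1,0,\dots,0)$, $(0,1,0,\dots,0)$, and $-e_1+e_2+e_r$ ($r=4,\dots,8$). Let $H=\langle(23),(34),(45),(56),(67),(78),X,Y\rangle\cong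 W(E_7)$ with Coxeter generators $s_1=Y(23)$, $s_2=(34)$, $s_3=(45)$, $s_4=(56)$, $s_5=(67)$, $s_6=(78)$, $s_{3'}=X$; $G=\langle s_2,\dots,s_6,s_{3'}\rangle$; $Q=\langle s_1,\dots,s_5,s_{3'}\rangle$. For $\vec w\in W$ put $x_0=b,x_1=h,x_2=g,x_3=f,x_4=e,x_5=d,x_6=c,x_7=a$. The coset $G\alpha$ is determined by the second entry of $\alpha\vec w$ (an affine function of $\vec w$); $v(i,j)$ ($0\le i<j\le7$) is the coset with second entry $x_i+x_j-x_7$, and $-v(i,j)$ the one with $1+x_7-x_i-x_j$ (these are all 56 cosets). Let $\mathscr{O}_1=\{v(0,j),-v(1,j):2\le j\le7\}$ (blue $L$ cosets), $\mathscr{O}_2=\{v(1,j),-v(0,j):2\le j\le 7\}$ (red $L$ cosets), $\mathscr{O}_3=\{\pm v(0,1)\}\cup\{\pm v(i,j):2\le i<j\le7\}$ ($J$ cosets). Group $H_1$ side. Let $V=\{(A,B,C,D,E,F,G)^T\in\mathbb{C}^7:E+F+G-A-B-C-D=1\}$; let $X_1$ have rows $e_1$, $-e_3+e_5$, $-e_2+e_5$, $e_4$, $e_5$, $-e_2-e_3+e_5+e_6$, $-e_2-e_3+e_5+e_7$ (so $X_1\vec x=(A,E-C,E-B,D,E,1+A+D-G,1+A+D-F)^T$ on $V$). Let $H_1=\langle(12),(23),(34),(56),(67),X_1\rangle\cong W(D_6)$ with Coxeter generators $a_1=(23),a_2=(34),a_3=X_1,a_4=(56),a_5=(67),a_{1'}=(14)$,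 $G_J=\langle(23),(34),(56),(67),X_1\rangle$, $G_L=\langle(12),(23),(34),(67),(57)X_1(57)\rangle$. Labels of $G_J\backslash H_1$: the first coordinate of $\alpha\vec x$ ($\alpha\in H_1$) determines $G_J\alpha$; with $(A_0,A_1,A_2,A_3)=(A,B,C,D)$, $(E_0,E_1,E_2,E_3)=(1,E,F,G)$, it equals $1+A_r-E_q$ or $E_q-A_r$ ($0\le r,q\le3$). To the first case assign the sign string $b_rb_q$ (concatenation), where $b_0={+}{+}{+}$, $b_1={+}{-}{-}$, $b_2={-}{+}{-}$, $b_3={-}{-}{+}$; to the second case assign the negation of that string. This identifies $G_J\backslash H_1$ with the 32 length-6 sign strings with evenly many minus signs. Labels of $G_L\backslash H_1$: the coset labeled $\sigma\in\{1,\dots,6,\overline1,\dots,\overline6\}$ is $G_L\beta_\sigma$ where $\beta_\sigma\vec x=u_\sigma$ on $V$ with $u_6=(A,B,C,D,G,F,E)$, $u_5=(A,B,C,D,F,E,G)$, $u_4=(A,B,C,D,E,F,G)$, $u_3=(A,1+A-E,1+A-F,1+A-G,1+A-D,1+A-B,1+A-C)$, $u_2=(A,1+A-E,1+A-F,1+A-G,1+A-C,1+A-B,1+A-D)$, $u_1=(A,1+A-E,1+A-F,1+A-G,1+A-B,1+A-C,1+A-D)$, $u_{\overline6}=(1-A,1-B,1-C,1-D,2-G,2-F,2-E)$, $u_{\overline5}=(1-A,1-B,1-C,1-D,2-F,2-E,2-G)$, $u_{\overline4}=(1-A,1-B,1-C,1-D,2-E,2-F,2-G)$, $u_{\overline3}=(1-A,E-A,F-A,G-A,1+D-A,1+B-A,1+C-A)$,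 $u_{\overline2}=(1-A,E-A,F-A,G-A,1+C-A,1+B-A,1+D-A)$, $u_{\overline1}=(1-A,E-A,F-A,G-A,1+B-A,1+C-A,1+D-A)$. Maps. $m:Q\to H_1$ is the group isomorphism with $m(s_k)=a_{6-k}$ ($1\le k\le5$), $m(s_{3'})=a_{1'}$. The map $\gamma_1:G\backslash H\to (G_L\backslash H_1)\cup(G_J\backslash H_1)$ is: $\gamma_1(v(0,j))=\gamma_1(v(1,j))=j-1$ and $\gamma_1(-v(1,j))=\gamma_1(-v(0,j))=\overline{j-1}$ for $2\le j\le 7$; $\gamma_1(v(0,1))={+}{+}{+}{+}{+}{+}$, $\gamma_1(-v(0,1))={-}{-}{-}{-}{-}{-}$; for $2\le i<j\le7$, $\gamma_1(v(i,j))$ is the string with plus signs in positions $i-1$ and $j-1$ and minus signs elsewhere, and $\gamma_1(-v(i,j))$ is its negation. Actions: a group acts on right cosets of a subgroup by right multiplication, written $\alpha\cdot(K\beta)=K\beta\alpha^{-1}$. *)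

From HB Require Import structures.
From mathcomp Require Import all_boot all_order all_algebra.
Set Implicit Arguments. Unset Strict Implicit. Unset Printing Implicit Defensive.
Import GRing.Theory Num.Theory.
Local Open Scope ring_scope.

Section Defs.
Variable F : numClosedFieldType.

Inductive gen n (S : seq 'M[F]_n.+1) : 'M[F]_n.+1 -> Prop :=
| gen1 : gen S 1
| genM x g : x \in S -> gen S g -> gen S (x * g)
| genV x g : x \in S -> gen S g -> gen S (x^-1 * g).

Definition mxl n (s : seq (seq int)) : 'M[F]_n :=
  \matrix_(i, j) ((nth [::] s i)`_j)%:~R.

Definition trp n (i j : nat) : 'M[F]_n.+1 := tperm_mx (inord i) (inord j).

(* Group H side (8x8).  Coordinates (a,b,c,d,e,f,g,h) = indices 0..7.   *)
Definition Xm : 'M[F]_8 := 2^-1 *: mxl 8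
  [:: [::  1; 1;-1;-1;-1; 1; 1; 1];
      [::  0; 2; 0; 0; 0; 0; 0; 0];
      [:: -1; 1; 1;-1;-1; 1; 1; 1];
      [:: -1; 1;-1; 1;-1; 1; 1; 1];
      [:: -1; 1;-1;-1; 1; 1; 1; 1];
      [::  0; 0; 0; 0; 0; 2; 0; 0];
      [::  0; 0; 0; 0; 0; 0; 2; 0];
      [::  0; 0; 0; 0; 0; 0; 0; 2]].

Definition Ym : 'M[F]_8 := mxl 8
  [:: [:: -1; 2; 0; 0; 0; 0; 0; 0];
      [:: -1; 1; 1; 0; 0; 0; 0; 0];
      [::  0; 1; 0; 0; 0; 0; 0; 0];
      [:: -1; 1; 0; 1; 0; 0; 0; 0];
      [:: -1; 1; 0; 0; 1; 0; 0; 0];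
      [:: -1; 1; 0; 0; 0; 1; 0; 0];
      [:: -1; 1; 0; 0; 0; 0; 1; 0];
      [:: -1; 1; 0; 0; 0; 0; 0; 1]].

(* (23) = trp 1 2, (34) = trp 2 3, ..., (78) = trp 6 7 *)
Definition s1 : 'M[F]_8 := Ym * trp 7 1 2.
Definition s2 : 'M[F]_8 := trp 7 2 3.
Definition s3 : 'M[F]_8 := trp 7 3 4.
Definition s4 : 'M[F]_8 := trp 7 4 5.
Definition s5 : 'M[F]_8 := trp 7 5 6.
Definition s6 : 'M[F]_8 := trp 7 6 7.
Definition s3' : 'M[F]_8 := Xm.

Definition Hgrp := gen [:: trp 7 1 2; trp 7 2 3; trp 7 3 4; trp 7 4 5;
                           trp 7 5 6; trp 7 6 7; Xm; Ym].
Definition Ggrp := gen [:: s2; s3; s4; s5; s6; s3'].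
Definition Qgrp := gen [:: s1; s2; s3; s4; s5; s3'].

Definition inW (w : 'cV[F]_8) : Prop :=
  2 + 3 * w (inord 0) 0 = \sum_(1 <= k < 8) w (inord k) 0.

(* x_0 = b, x_1 = h, x_2 = g, x_3 = f, x_4 = e, x_5 = d, x_6 = c, x_7 = a *)
Definition xc (w : 'cV[F]_8) (k : nat) : F :=
  w (inord (nth 0%N [:: 1; 7; 6; 5; 4; 3; 2; 0]%N k)) 0.

(* labels of G\H: (true,i,j) = v(i,j), (false,i,j) = -v(i,j), 0<=i<j<=7 *)
Definition lab := (bool * nat * nat)%type.
Definition lab_ok (l : lab) : bool := let '(_, i, j) := l in (i < j < 8)%N.

Definition labval (l : lab) (w : 'cV[F]_8) : F :=
  let '(sg, i, j) := l in
  if sg then xc w i + xc w j - xc w 7 else 1 + xc w 7 - xc w i - xc w j.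

(* the coset G beta is labelled l: second entry of beta w is the affine
   function of l, for all w in W *)
Definition labG (beta : 'M[F]_8) (l : lab) : Prop :=
  lab_ok l /\ forall w, inW w -> (beta *m w) (inord 1) 0 = labval l w.

Definition inO1 (l : lab) : bool := let '(sg, i, j) := l in
  [&& (2 <= j <= 7)%N & (sg && (i == 0%N)) || (~~ sg && (i == 1%N))].
Definition inO2 (l : lab) : bool := let '(sg, i, j) := l in
  [&& (2 <= j <= 7)%N & (sg && (i == 1%N)) || (~~ sg && (i == 0%N))].
Definition inO3 (l : lab) : bool := let '(sg, i, j) := l in
  ((i == 0%N) && (j == 1%N)) || (2 <= i)%N.

(* Group H1 side (7x7). Coordinates (A,B,C,D,E,F,G) = indices 0..6.    *)
Definition c7 (x : 'cV[F]_7) (k : nat) : F := x (inord k) 0.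

Definition inV (x : 'cV[F]_7) : Prop :=
  c7 x 4 + c7 x 5 + c7 x 6 - c7 x 0 - c7 x 1 - c7 x 2 - c7 x 3 = 1.

Definition X1 : 'M[F]_7 := mxl 7
  [:: [::  1; 0; 0; 0; 0; 0; 0];
      [::  0; 0;-1; 0; 1; 0; 0];
      [::  0;-1; 0; 0; 1; 0; 0];
      [::  0; 0; 0; 1; 0; 0; 0];
      [::  0; 0; 0; 0; 1; 0; 0];
      [::  0;-1;-1; 0; 1; 1; 0];
      [::  0;-1;-1; 0; 1; 0; 1]].

Definition a1 : 'M[F]_7 := trp 6 1 2.
Definition a2 : 'M[F]_7 := trp 6 2 3.
Definition a3 : 'M[F]_7 := X1.
Definition a4 : 'M[F]_7 := trp 6 4 5.
Definition a5 : 'M[F]_7 := trp 6 5 6.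
Definition a1' : 'M[F]_7 := trp 6 0 3.

Definition H1grp := gen [:: trp 6 0 1; trp 6 1 2; trp 6 2 3; trp 6 4 5;
                            trp 6 5 6; X1].
Definition GJgrp := gen [:: trp 6 1 2; trp 6 2 3; trp 6 4 5; trp 6 5 6; X1].
Definition GLgrp := gen [:: trp 6 0 1; trp 6 1 2; trp 6 2 3; trp 6 5 6;
                            trp 6 4 6 * X1 * trp 6 4 6].

(* u_sigma, sigma = (bar, k): bar = false is k, bar = true is \overline k *)
Definition uL (bar : bool) (k : nat) (x : 'cV[F]_7) : seq F :=
  let A := c7 x 0 in let B := c7 x 1 in let C := c7 x 2 in let D := c7 x 3 in
  let E := c7 x 4 in let Fx := c7 x 5 in let G := c7 x 6 in
  if ~~ bar then
    match k with
    | 6 => [:: A; B; C; D; G; Fx; E]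
    | 5 => [:: A; B; C; D; Fx; E; G]
    | 4 => [:: A; B; C; D; E; Fx; G]
    | 3 => [:: A; 1 + A - E; 1 + A - Fx; 1 + A - G; 1 + A - D; 1 + A - B; 1 + A - C]
    | 2 => [:: A; 1 + A - E; 1 + A - Fx; 1 + A - G; 1 + A - C; 1 + A - B; 1 + A - D]
    | _ => [:: A; 1 + A - E; 1 + A - Fx; 1 + A - G; 1 + A - B; 1 + A - C; 1 + A - D]
    end
  else
    match k with
    | 6 => [:: 1 - A; 1 - B; 1 - C; 1 - D; 2 - G; 2 - Fx; 2 - E]
    | 5 => [:: 1 - A; 1 - B; 1 - C; 1 - D; 2 - Fx; 2 - E; 2 - G]
    | 4 => [:: 1 - A; 1 - B; 1 - C; 1 - D; 2 - E; 2 - Fx; 2 - G]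
    | 3 => [:: 1 - A; E - A; Fx - A; G - A; 1 + D - A; 1 + B - A; 1 + C - A]
    | 2 => [:: 1 - A; E - A; Fx - A; G - A; 1 + C - A; 1 + B - A; 1 + D - A]
    | _ => [:: 1 - A; E - A; Fx - A; G - A; 1 + B - A; 1 + C - A; 1 + D - A]
    end.

(* delta lies in the coset G_L beta_sigma, where beta_sigma in H1 acts on V
   by u_sigma *)
Definition inGL (delta : 'M[F]_7) (bar : bool) (k : nat) : Prop :=
  (1 <= k <= 6)%N /\
  exists beta, H1grp beta /\
    (forall x, inV x -> forall i : 'I_7, (beta *m x) i 0 = nth 0 (uL bar k x) i) /\
    GLgrp (delta * beta^-1).

(* sign strings: true = '+', false = '-' *)
Definition bstr (r : nat) : seq bool :=
  match r with
  | 0 => [:: true; true; true]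
  | 1 => [:: true; false; false]
  | 2 => [:: false; true; false]
  | _ => [:: false; false; true]
  end.

Definition Acoord (x : 'cV[F]_7) (r : nat) : F := c7 x r.
Definition Ecoord (x : 'cV[F]_7) (q : nat) : F :=
  if q == 0%N then 1 else c7 x (q + 3).

Definition inGJ (delta : 'M[F]_7) (s : seq bool) : Prop :=
  exists r q (sg : bool), [/\ (r < 4)%N, (q < 4)%N,
    s = (if sg then bstr r ++ bstr q else map negb (bstr r ++ bstr q)) &
    forall x, inV x -> (delta *m x) (inord 0) 0 =
      (if sg then 1 + Acoord x r - Ecoord x q else Ecoord x q - Acoord x r)].

(* labels of (G_L\H1) + (G_J\H1) *)
Definition tlab := ((bool * nat) + seq bool)%type.

Definition inT (delta : 'M[F]_7) (t : tlab) : Prop :=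
  match t with
  | inl (bar, k) => inGL delta bar k
  | inr s => inGJ delta s
  end.

Definition validL (t : bool * nat) : bool := (1 <= t.2 <= 6)%N.
Definition validJ (s : seq bool) : bool := (size s == 6%N) && ~~ odd (count negb s).

End Defs.

Definition gamma1 (l : lab) : tlab :=
  let '(sg, i, j) := l in
  if (i == 0%N) && (j == 1%N) then inr (nseq 6 sg)
  else if (i <= 1)%N then inl (~~ sg, j.-1)
  else inr [seq (if (k == i.-1) || (k == j.-1) then sg else ~~ sg) | k <- iota 1 6].

From HB Require Import structures.
From mathcomp Require Import all_boot all_order all_algebra.
Import GRing.Theory Num.Theory.
Local Open Scope ring_scope.
From mathcomp Require Import ring.
Set Implicit Arguments. Unset Strict Implicit. Unset Printing Implicit Defensive.

(* All the data are explicit, so the theorem reduces to finitely many exact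
   computations with integer matrices, checked by [vm_compute].
   Q is generated by six involutions and the equivariance is stable under
   products, so one generator s at a time suffices.  A coset G beta is
   determined by the affine function w |-> (beta w)_2 on W; the 56 such
   functions already differ at a single point of W, so the label of
   G beta s^-1 = G beta s is read off by composing that function with s.
   On the H_1 side an L coset G_L beta_sigma is sent to G_L beta_sigma'
   because beta_sigma m(s) = g beta_sigma' for an explicit word g in the
   generators of G_L, and the label of a J coset, the first coordinate of
   delta, is transported by composing it with m(s).  That gamma_1 is a
   bijection on each orbit is checked by enumeration. *)

(* Integer matrices are lists of rows, mapped to matrices over F by [mxl];
   an affine form [(c, f)] stands for [w |-> c + sum_k f_k w_k]. *)
Notation zmx := (seq (seq int)).
Notation aform := (int * seq int)%type.

Definition sumz (n : nat) (g : nat -> int) : int :=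
  foldr (fun k acc => g k + acc) 0 (iota 0 n).
Definition dotz n (f g : seq int) : int := sumz n (fun k => f`_k * g`_k).
Definition vmulz n (f : seq int) (M : zmx) : seq int :=
  mkseq (fun j => sumz n (fun k => f`_k * (nth [::] M k)`_j)) n.
Definition mulz n (A B : zmx) : zmx := mkseq (fun i => vmulz n (nth [::] A i) B) n.
Definition addz n (f g : seq int) : seq int := mkseq (fun k => f`_k + g`_k) n.
Definition scalez n (c : int) (f : seq int) : seq int := mkseq (fun k => c * f`_k) n.
Definition mscalez n (c : int) (A : zmx) : zmx := mkseq (fun i => scalez n c (nth [::] A i)) n.
Definition deltaz n (p : nat) : seq int := mkseq (fun k => (k == p)%:Z) n.
Definition idz n : zmx := mkseq (deltaz n) n.
Definition tpermz n (i j : nat) : zmx :=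
  mkseq (fun r => deltaz n (if r == i then j else if r == j then i else r)) n.
Definition wordz n (S : seq zmx) (w : seq nat) : zmx :=
  foldr (fun i acc => mulz n (nth [::] S i) acc) (idz n) w.

Definition acst n (c : int) : aform := (c, nseq n 0).
Definition avar n (i : nat) : aform := (0, deltaz n i).
Definition aadd n (p q : aform) : aform := (p.1 + q.1, addz n p.2 q.2).
Definition aopp n (p : aform) : aform := (- p.1, scalez n (-1) p.2).
Definition asub n (p q : aform) : aform := aadd n p (aopp n q).

(* On the hyperplane [h = 0], the form [p] composed with [d^-1 M] is [p2]:
   the multiple [mu] of [h] to be absorbed is read off at a pivot coordinate
   where [h] has coefficient [+-1]. *)
Definition aform_compb n (h : aform) (piv : nat) (d : int) (M : zmx) (p p2 : aform) :=
  let g := vmulz n p.2 M in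
  let mu := (g`_piv - d * p2.2`_piv) * h.2`_piv in
  (g == addz n (scalez n d p2.2) (scalez n mu h.2)) && (d * p2.1 == d * p.1 - h.1 * mu).

Lemma sumzE n g : sumz n g = \sum_(k < n) g k.
Proof.
rewrite /sumz -(big_mkord xpredT g) /index_iota subn0.
by elim: (iota 0 n) => [|a s IH] /=; rewrite ?big_nil ?big_cons ?IH.
Qed.

Lemma count1_exists_unique (T : eqType) (P : pred T) (s : seq T) :
  count P s = 1%N -> exists! x, x \in s /\ P x.
Proof.
rewrite -size_filter; case E: (filter P s) => [|a [|]] // _.
have : a \in filter P s by rewrite E mem_head.
rewrite mem_filter => /andP[Pa sa]; exists a; split=> // b [sb Pb].
have : b \in filter P s by rewrite mem_filter Pb sb.
by rewrite E inE => /eqP.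
Qed.

Lemma uniq_map_inj_in (T1 T2 : eqType) (f : T1 -> T2) (s : seq T1) :
  uniq (map f s) -> {in s &, injective f}.
Proof.
elim: s => //= a s IH /andP[fa_s u] x y.
rewrite !inE => /predU1P[->|xs] /predU1P[->|ys] e //.
- by move: fa_s; rewrite e map_f.
- by move: fa_s; rewrite -e map_f.
- exact: IH.
Qed.

Section IntegerMatrices.
Variable F : numClosedFieldType.

Definition aeval n (p : aform) (w : 'cV[F]_n) : F :=
  p.1%:~R + \sum_(k < n) (p.2`_k)%:~R * w k 0.

Lemma aeval_pair n c f (w : 'cV[F]_n) : aeval (c, f) w = c%:~R + aeval (0, f) w.
Proof. by rewrite /aeval add0r. Qed.

Lemma aeval_add n p q (w : 'cV[F]_n) : aeval (aadd n p q) w = aeval p w + aeval q w.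
Proof.
rewrite /aeval /= intrD addrACA -big_split /=; congr (_ + _).
by apply: eq_bigr => k _; rewrite nth_mkseq // intrD mulrDl.
Qed.

Lemma aeval_opp n p (w : 'cV[F]_n) : aeval (aopp n p) w = - aeval p w.
Proof.
rewrite /aeval /= intrN opprD -sumrN; congr (_ + _).
by apply: eq_bigr => k _; rewrite nth_mkseq // mulN1r intrN mulNr.
Qed.

Lemma aeval_sub n p q (w : 'cV[F]_n) : aeval (asub n p q) w = aeval p w - aeval q w.
Proof. by rewrite aeval_add aeval_opp. Qed.

Lemma aeval_scalez n c f (w : 'cV[F]_n) :
  aeval (0, scalez n c f) w = c%:~R * aeval (0, f) w.
Proof.
rewrite /aeval !add0r mulr_sumr; apply: eq_bigr => k _.
by rewrite nth_mkseq // intrM mulrA.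
Qed.

Lemma aeval_cst n c (w : 'cV[F]_n) : aeval (acst n c) w = c%:~R.
Proof. by rewrite /aeval big1 ?addr0 // => k _; rewrite nth_nseq if_same mul0r. Qed.

Lemma aeval_var n i (w : 'cV[F]_n.+1) :
  (i < n.+1)%N -> aeval (avar n.+1 i) w = w (inord i) 0.
Proof.
move=> lt_in; rewrite /aeval add0r (bigD1 (inord i)) //= big1 ?addr0.
  by rewrite nth_mkseq ?inordK // eqxx mul1r.
move=> k ne_ki; rewrite nth_mkseq //; case: eqP => [ek|]; last by rewrite mul0r.
by move: ne_ki; rewrite -ek inord_val eqxx.
Qed.

Lemma aeval_expand n p (w : 'cV[F]_n.+1) : aeval p w =
  p.1%:~R + foldr (fun k acc => (p.2`_k)%:~R * w (inord k) 0 + acc) 0 (iota 0 n.+1).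
Proof.
rewrite /aeval (eq_bigr (fun k : 'I_n.+1 => (p.2`_k)%:~R * w (inord k) 0)); last first.
  by move=> k _; rewrite inord_val.
rewrite -(big_mkord xpredT (fun k => (p.2`_k)%:~R * w (inord k) 0)) /index_iota subn0.
by congr (_ + _); elim: (iota 0 n.+1) => [|a s IH]; rewrite ?big_nil ?big_cons ?IH.
Qed.

Lemma aeval_col n p (v : seq int) :
  aeval p (\col_(i < n) ((v`_i)%:~R : F)) = (p.1 + dotz n p.2 v)%:~R.
Proof.
rewrite /aeval intrD /dotz sumzE rmorph_sum /=; congr (_ + _).
by apply: eq_bigr => k _; rewrite mxE intrM.
Qed.

Lemma mxl_mulmx n A B : mxl F n A *m mxl F n B = mxl F n (mulz n A B).
Proof.
apply/matrixP => i j; rewrite !mxE /mulz nth_mkseq // /vmulz nth_mkseq //.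
by rewrite sumzE rmorph_sum /=; apply: eq_bigr => k _; rewrite !mxE intrM.
Qed.

Lemma mxlM n A B : mxl F n.+1 A * mxl F n.+1 B = mxl F n.+1 (mulz n.+1 A B).
Proof. by rewrite -mxl_mulmx mulmxE. Qed.

Lemma mxl_id n : mxl F n.+1 (idz n.+1) = 1.
Proof.
apply/matrixP => i j; rewrite !mxE /idz /deltaz !nth_mkseq //.
by rewrite eq_sym -(inj_eq val_inj) pmulrn.
Qed.

Lemma mxl_scale n c A : mxl F n (mscalez n c A) = c%:~R *: mxl F n A.
Proof. by apply/matrixP => i j; rewrite !mxE !nth_mkseq // intrM. Qed.

Lemma mxl_mulmx_row n M (w : 'cV[F]_n) i :
  (mxl F n M *m w) i 0 = aeval (0, nth [::] M i) w.
Proof. by rewrite mxE /aeval add0r; apply: eq_bigr => k _; rewrite mxE. Qed.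

Lemma aeval_mxl n p M (w : 'cV[F]_n) :
  aeval p (mxl F n M *m w) = aeval (p.1, vmulz n p.2 M) w.
Proof.
rewrite /aeval; congr (_ + _).
rewrite [RHS](eq_bigr (fun j : 'I_n => \sum_(k < n)
  (p.2`_k)%:~R * ((nth [::] M k)`_j)%:~R * w j 0)); last first.
  move=> j _; rewrite nth_mkseq // sumzE rmorph_sum /= mulr_suml.
  by apply: eq_bigr => k _; rewrite intrM.
rewrite exchange_big /=; apply: eq_bigr => k _.
by rewrite !mxE mulr_sumr; apply: eq_bigr => j _; rewrite !mxE mulrA.
Qed.

Lemma aform_compbP n h piv d M p p2 : d != 0 ->
  aform_compb n h piv d M p p2 -> forall w : 'cV[F]_n, aeval h w = 0 ->
  aeval p (((d%:~R)^-1 *: mxl F n M) *m w) = aeval p2 w.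
Proof.
case: p p2 => c f [c2 f2] d0 /andP[/eqP eg /eqP ec] w hw /=.
move: eg ec; set g := vmulz _ _ _; set mu := (_ * _)%R => eg ec.
have lin_scale a (u : 'cV[F]_n) f' : aeval (0, f') (a *: u) = a * aeval (0, f') u.
  by rewrite /aeval !add0r mulr_sumr; apply: eq_bigr => k _; rewrite mxE mulrCA.
have lin_lincomb a b f' f'' (u : 'cV[F]_n) :
    aeval (0, addz n (scalez n a f') (scalez n b f'')) u =
    a%:~R * aeval (0, f') u + b%:~R * aeval (0, f'') u.
  rewrite -[LHS]/(aeval (aadd n (0, scalez n a f') (0, scalez n b f'')) u).
  by rewrite aeval_add !aeval_scalez.
have -> : aeval (c, f) (((d%:~R)^-1 *: mxl F n M) *m w) =
    c%:~R + (d%:~R)^-1 * aeval (0, g) w.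
  by rewrite aeval_pair -scalemxAl lin_scale aeval_mxl.
have hw' : aeval (0, h.2) w = - h.1%:~R.
  by apply/eqP; rewrite -addr_eq0 addrC -aeval_pair -surjective_pairing hw.
have dF : (d%:~R : F) != 0 by rewrite intr_eq0.
rewrite eg lin_lincomb hw' aeval_pair.
have -> : (c2%:~R : F) = (d%:~R)^-1 * (d%:~R * c%:~R - h.1%:~R * mu%:~R).
  by rewrite -!intrM -intrB -ec intrM mulrA mulVf ?mul1r.
by field.
Qed.

Lemma aform_compb1P n h piv M p p2 : aform_compb n h piv 1 M p p2 ->
  forall w : 'cV[F]_n, aeval h w = 0 -> aeval p (mxl F n M *m w) = aeval p2 w.
Proof.
by move=> hc w hw; rewrite -(aform_compbP (d := 1) isT hc hw) mulr1z invr1 scale1r.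
Qed.

Lemma trp_tpermz n i j : (i < n.+1)%N -> (j < n.+1)%N ->
  trp F n i j = mxl F n.+1 (tpermz n.+1 i j).
Proof.
move=> hi hj; apply/matrixP => r c.
rewrite /trp tperm_mxEsub !mxE /tpermz /deltaz !nth_mkseq //.
rewrite /= perm.permE /= -!(inj_eq val_inj) /= !inordK // -pmulrn eq_sym.
by case: ifP => _; [|case: ifP => _]; rewrite -?(inj_eq val_inj) /= ?inordK.
Qed.

End IntegerMatrices.

Section Generated.
Variables (F : numClosedFieldType) (n : nat) (S : seq 'M[F]_n.+1).

Lemma invol_unit (M : 'M[F]_n.+1) : M * M = 1 -> M \is a GRing.unit.
Proof. by move=> MM; apply/unitrP; exists M. Qed.

Lemma invol_inv (M : 'M[F]_n.+1) : M * M = 1 -> M^-1 = M.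
Proof. by move=> MM; rewrite -[M^-1]mulr1 -MM mulrA mulVr ?mul1r // invol_unit. Qed.

Lemma gen_mul g h : gen S g -> gen S h -> gen S (g * h).
Proof.
elim=> [|x g' xS _ IH|x g' xS _ IH] hh; first by rewrite mul1r.
  by rewrite -mulrA; apply: genM xS (IH hh).
by rewrite -mulrA; apply: genV xS (IH hh).
Qed.

Lemma gen_unit g : {in S, forall x, x \is a GRing.unit} -> gen S g -> g \is a GRing.unit.
Proof.
move=> S_unit; elim=> [|x g' xS _ IH|x g' xS _ IH]; first exact: unitr1.
  by rewrite unitrMl // S_unit.
by rewrite unitrMl // unitrV S_unit.
Qed.

Lemma gen_invol_ind (P : 'M[F]_n.+1 -> Prop) :
  {in S, forall x, x * x = 1} -> P 1 ->
  (forall x g, x \in S -> gen S g -> P g -> P (x * g)) ->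
  forall g, gen S g -> P g.
Proof.
move=> S_invol P1 PM g; elim=> // x h xS gh Ph.
by rewrite invol_inv ?S_invol //; apply: PM.
Qed.

End Generated.

Lemma gen_word (F : numClosedFieldType) n (S : seq zmx) (w : seq nat) :
  all (fun i => i < size S)%N w ->
  gen (map (mxl F n.+1) S) (mxl F n.+1 (wordz n.+1 S w)).
Proof.
elim: w => [|i w IH] /=; first by rewrite mxl_id => _; apply: gen1.
case/andP=> iS wS; rewrite -mxlM; apply: genM; last exact: IH.
exact/map_f/mem_nth.
Qed.

Definition xpos (k : nat) : nat := nth 0%N [:: 1; 7; 6; 5; 4; 3; 2; 0]%N k.
Definition xvar (k : nat) : aform := avar 8 (xpos k).

Definition lab_form (l : lab) : aform :=
  let '(sg, i, j) := l in
  if sg then asub 8 (aadd 8 (xvar i) (xvar j)) (xvar 7)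
  else asub 8 (asub 8 (aadd 8 (acst 8 1) (xvar 7)) (xvar i)) (xvar j).

Definition W_form : aform := (2, [:: 3; -1; -1; -1; -1; -1; -1; -1]).

Definition labs : seq lab :=
  [seq l <- [seq (p, j) | p <- [seq (sg, i) | sg <- [:: true; false], i <- iota 0 8],
                          j <- iota 0 8] | lab_ok l].

(* A point of W at which the 56 label forms take pairwise distinct values. *)
Definition w0_vals : seq int := [:: 0; 13; 21; -27; -3; -21; -7; 26].
Definition lab_at_w0 (l : lab) : int := (lab_form l).1 + dotz 8 (lab_form l).2 w0_vals.

Lemma w0_vals_inW : W_form.1 + dotz 8 W_form.2 w0_vals = 0.
Proof. by vm_compute. Qed.

Lemma lab_at_w0_uniq : uniq (map lab_at_w0 labs).
Proof. by vm_compute. Qed.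

Lemma mem_labs l : (l \in labs) = lab_ok l.
Proof.
case: l => [[sg i] j]; rewrite mem_filter andb_idr // => /andP[ij j8].
apply/allpairsP; exists ((sg, i), j); split; rewrite ?mem_iota //.
apply/allpairsP; exists (sg, i); split=> //; first by case: sg.
by rewrite mem_iota /= (ltn_trans ij j8).
Qed.

Definition V_form : aform := (-1, [:: -1; -1; -1; -1; 1; 1; 1]).

Definition uL_form (bar : bool) (k : nat) : seq aform :=
  let A := avar 7 0 in let B := avar 7 1 in let C := avar 7 2 in
  let D := avar 7 3 in let E := avar 7 4 in let Fx := avar 7 5 in
  let G := avar 7 6 in
  let c := acst 7 in let sub := asub 7 in
  let rA X := sub (aadd 7 (c 1) A) X in let Ar X := sub (aadd 7 (c 1) X) A in
  if ~~ bar then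
    match k with
    | 6 => [:: A; B; C; D; G; Fx; E]
    | 5 => [:: A; B; C; D; Fx; E; G]
    | 4 => [:: A; B; C; D; E; Fx; G]
    | 3 => [:: A; rA E; rA Fx; rA G; rA D; rA B; rA C]
    | 2 => [:: A; rA E; rA Fx; rA G; rA C; rA B; rA D]
    | _ => [:: A; rA E; rA Fx; rA G; rA B; rA C; rA D]
    end
  else
    match k with
    | 6 => [:: sub (c 1) A; sub (c 1) B; sub (c 1) C; sub (c 1) D;
               sub (c 2) G; sub (c 2) Fx; sub (c 2) E]
    | 5 => [:: sub (c 1) A; sub (c 1) B; sub (c 1) C; sub (c 1) D;
               sub (c 2) Fx; sub (c 2) E; sub (c 2) G]
    | 4 => [:: sub (c 1) A; sub (c 1) B; sub (c 1) C; sub (c 1) D;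
               sub (c 2) E; sub (c 2) Fx; sub (c 2) G]
    | 3 => [:: sub (c 1) A; sub E A; sub Fx A; sub G A; Ar D; Ar B; Ar C]
    | 2 => [:: sub (c 1) A; sub E A; sub Fx A; sub G A; Ar C; Ar B; Ar D]
    | _ => [:: sub (c 1) A; sub E A; sub Fx A; sub G A; Ar B; Ar C; Ar D]
    end.

(* On V the constant of an affine form can be absorbed into a multiple of the
   linear part of [V_form], which equals 1 there. *)
Definition homog (p : aform) : seq int := addz 7 p.2 (scalez 7 p.1 V_form.2).
Definition beta_rows (s : bool * nat) : zmx := map homog (uL_form s.1 s.2).

Definition V_frame : zmx :=
  [:: [:: 0; 0; 0; 1; 0; 0; 0];
      [:: 0; 0; 0; 0; 1; 0; 0];
      [:: 0; 0; 0; 0; 0; 1; 0];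
      [:: 0; 0; 0; 0; 0; 0; 1];
      [:: 1; 0; 0; 1; 1; 1; 1];
      [:: 0; 1; 0; 1; 1; 1; 1];
      [:: 0; 0; 1; 0; 0; 0; 0]].
Definition V_frame_inv : zmx :=
  [:: [:: -1; -1; -1; -1; 1; 0; 0];
      [:: -1; -1; -1; -1; 0; 1; 0];
      [::  0;  0;  0;  0; 0; 0; 1];
      [::  1;  0;  0;  0; 0; 0; 0];
      [::  0;  1;  0;  0; 0; 0; 0];
      [::  0;  0;  1;  0; 0; 0; 0];
      [::  0;  0;  0;  1; 0; 0; 0]].

Lemma V_frame_invK : mulz 7 V_frame V_frame_inv = idz 7.
Proof. by vm_compute. Qed.

Lemma V_frame_cols : all (fun j => V_form.1 + (vmulz 7 V_form.2 V_frame)`_j == 0) (iota 0 7).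
Proof. by vm_compute. Qed.

Definition X1_z : zmx :=
  [:: [::  1; 0; 0; 0; 0; 0; 0];
      [::  0; 0;-1; 0; 1; 0; 0];
      [::  0;-1; 0; 0; 1; 0; 0];
      [::  0; 0; 0; 1; 0; 0; 0];
      [::  0; 0; 0; 0; 1; 0; 0];
      [::  0;-1;-1; 0; 1; 1; 0];
      [::  0;-1;-1; 0; 1; 0; 1]].

Definition H1_z : seq zmx :=
  [:: tpermz 7 0 1; tpermz 7 1 2; tpermz 7 2 3; tpermz 7 4 5; tpermz 7 5 6; X1_z].
Definition GL_z : seq zmx :=
  [:: tpermz 7 0 1; tpermz 7 1 2; tpermz 7 2 3; tpermz 7 5 6;
      mulz 7 (mulz 7 (tpermz 7 4 6) X1_z) (tpermz 7 4 6)].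

Lemma H1_z_invol : all (fun g => mulz 7 g g == idz 7) H1_z.
Proof. by vm_compute. Qed.

Definition sigmas : seq (bool * nat) := [seq (b, k) | b <- [:: false; true], k <- iota 1 6].
Definition sigma_index (s : bool * nat) : nat := (if s.1 then 6 else 0) + s.2.-1.

Lemma mem_sigmas s : validL s -> s \in sigmas.
Proof. by case: s => b [|[|[|[|[|[|[|k]]]]]]] //; case: b. Qed.

(* One word in [H1_z] (as indices into it) per element of [sigmas]. *)
Definition beta_words : seq (seq nat) :=
  [:: [:: 5; 3; 2; 5; 4; 3; 1; 2; 5]; [:: 5; 3; 2; 5; 4; 3; 1; 2; 5; 1];
      [:: 5; 3; 2; 5; 4; 3; 1; 2; 5; 1; 2]; [::]; [:: 3]; [:: 3; 4; 3];
      [:: 0; 5; 4; 3; 2; 5; 4; 3; 2; 1; 0; 5; 4; 1; 0];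
      [:: 0; 5; 3; 2; 5; 4; 3; 1; 0; 5; 4; 1; 2; 0];
      [:: 0; 5; 3; 2; 5; 4; 3; 1; 0; 5; 4; 1; 0];
      [:: 2; 5; 3; 2; 0; 5; 4; 3; 2; 0; 5; 4; 3; 1; 2; 0; 5; 3; 4; 3; 1; 0];
      [:: 2; 5; 3; 2; 0; 5; 4; 3; 2; 0; 5; 4; 3; 1; 2; 0; 5; 3; 4; 1; 0];
      [:: 2; 5; 3; 2; 0; 5; 4; 3; 2; 0; 5; 4; 3; 1; 2; 0; 5; 1; 0]].

Lemma beta_rows_words : all (fun s => let w := nth [::] beta_words (sigma_index s) in
  (beta_rows s == wordz 7 H1_z w) && all (fun i => i < size H1_z)%N w) sigmas.
Proof. by vm_compute. Qed.

Definition jlabs : seq (nat * nat * bool) :=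
  [seq (p, sg) | p <- [seq (r, q) | r <- iota 0 4, q <- iota 0 4], sg <- [:: true; false]].

Definition jstr (t : nat * nat * bool) : seq bool :=
  let '(r, q, sg) := t in
  if sg then bstr r ++ bstr q else map negb (bstr r ++ bstr q).

Definition eform (q : nat) : aform := if q == 0%N then acst 7 1 else avar 7 (q + 3).

Definition jform (t : nat * nat * bool) : aform :=
  let '(r, q, sg) := t in
  if sg then asub 7 (aadd 7 (acst 7 1) (avar 7 r)) (eform q) else asub 7 (eform q) (avar 7 r).

Lemma mem_jlabs r q sg : ((r, q, sg) \in jlabs) = (r < 4)%N && (q < 4)%N.
Proof.
apply/allpairsP/andP => [[[rq sg'] [/allpairsP[[r' q'] [r4 q4 ->]] _ [-> -> _]]]|[r4 q4]].
  by move: r4 q4; rewrite !mem_iota.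
exists ((r, q), sg); split=> //; last by case: sg.
by apply/allpairsP; exists (r, q); rewrite !mem_iota.
Qed.

Definition Y_z : zmx :=
  [:: [:: -1; 2; 0; 0; 0; 0; 0; 0];
      [:: -1; 1; 1; 0; 0; 0; 0; 0];
      [::  0; 1; 0; 0; 0; 0; 0; 0];
      [:: -1; 1; 0; 1; 0; 0; 0; 0];
      [:: -1; 1; 0; 0; 1; 0; 0; 0];
      [:: -1; 1; 0; 0; 0; 1; 0; 0];
      [:: -1; 1; 0; 0; 0; 0; 1; 0];
      [:: -1; 1; 0; 0; 0; 0; 0; 1]].

Definition X_z : zmx :=
  [:: [::  1; 1;-1;-1;-1; 1; 1; 1];
      [::  0; 2; 0; 0; 0; 0; 0; 0];
      [:: -1; 1; 1;-1;-1; 1; 1; 1];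
      [:: -1; 1;-1; 1;-1; 1; 1; 1];
      [:: -1; 1;-1;-1; 1; 1; 1; 1];
      [::  0; 0; 0; 0; 0; 2; 0; 0];
      [::  0; 0; 0; 0; 0; 0; 2; 0];
      [::  0; 0; 0; 0; 0; 0; 0; 2]].

(* The generator [qden^-1 qmx] of Q, its image [qimg] under m, and for each
   [s] of [sigmas] a word g in [GL_z] with [beta_s * qimg = g * beta_s'],
   where [s'] is the image of [s]. *)
Record qcert := QCert { qden : int; qmx : zmx; qimg : zmx; qwords : seq (seq nat) }.

Definition qcert_tuple (c : qcert) := (qden c, qmx c, qimg c, qwords c).
Definition tuple_qcert (t : int * zmx * zmx * seq (seq nat)) :=
  let: (d, g, a, w) := t in QCert d g a w.
Lemma qcert_tupleK : cancel qcert_tuple tuple_qcert. Proof. by case. Qed.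
HB.instance Definition _ := Equality.copy qcert (can_type qcert_tupleK).

Definition Q_certs : seq qcert :=
  [:: QCert 1 (mulz 8 Y_z (tpermz 8 1 2)) (tpermz 7 5 6)
        [:: [:: 2]; [:: 2]; [:: 2]; [:: 3]; [:: 3]; [:: 3];
            [:: 2]; [:: 2]; [:: 2]; [:: 3]; [:: 3]; [:: 3]];
      QCert 1 (tpermz 8 2 3) (tpermz 7 4 5)
        [:: [:: 1]; [:: 1]; [:: 1]; [::]; [::]; [:: 3];
            [:: 1]; [:: 1]; [:: 1]; [::]; [::]; [:: 3]];
      QCert 1 (tpermz 8 3 4) X1_z
        [:: [:: 1; 2; 4; 2; 1]; [:: 1; 2; 4; 2; 1]; [:: 4; 3; 2; 4; 3; 1; 2; 1];
            [:: 2; 4; 3; 1; 2; 4; 3; 2]; [:: 3; 4; 3]; [:: 4];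
            [:: 1; 2; 4; 2; 1]; [:: 1; 2; 4; 2; 1]; [:: 4; 3; 2; 4; 3; 1; 2; 1];
            [:: 2; 4; 3; 1; 2; 4; 3; 2]; [:: 3; 4; 3]; [:: 4]];
      QCert 1 (tpermz 8 4 5) (tpermz 7 2 3)
        [:: [:: 3]; [::]; [::]; [:: 2]; [:: 2]; [:: 2];
            [:: 3]; [::]; [::]; [:: 2]; [:: 2]; [:: 2]];
      QCert 1 (tpermz 8 5 6) (tpermz 7 1 2)
        [:: [::]; [::]; [:: 3]; [:: 1]; [:: 1]; [:: 1];
            [::]; [::]; [:: 3]; [:: 1]; [:: 1]; [:: 1]];
      QCert 2 X_z (tpermz 7 0 3)
        [:: [:: 2; 4; 1; 2; 0; 4; 1; 0]; [:: 2; 4; 1; 2; 0; 4; 1; 0];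
            [:: 4; 3; 2; 0; 4; 3; 2; 0; 4]; [:: 0; 1; 2; 1; 0]; [:: 0; 1; 2; 1; 0];
            [:: 0; 1; 2; 1; 0]; [:: 2; 4; 1; 2; 0; 4; 1; 0]; [:: 2; 4; 1; 2; 0; 4; 1; 0];
            [:: 4; 3; 2; 0; 4; 3; 2; 0; 4]; [:: 0; 1; 2; 1; 0]; [:: 0; 1; 2; 1; 0];
            [:: 0; 1; 2; 1; 0]]].

Definition W_compb (c : qcert) : aform -> aform -> bool :=
  aform_compb 8 W_form 1 (qden c) (qmx c).
Definition V_compb (a : zmx) : aform -> aform -> bool := aform_compb 7 V_form 4 1 a.

(* Image labels are found by search; [lab_step_ok] certifies them. *)
Definition lab_image (c : qcert) (l : lab) : lab :=
  head l [seq l2 <- labs | W_compb c (lab_form l) (lab_form l2)].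
Definition jlab_image (a : zmx) (t : nat * nat * bool) :=
  head t [seq t2 <- jlabs | V_compb a (jform t) (jform t2)].

Definition L_step_ok (a : zmx) (w : seq nat) (s s2 : bool * nat) : bool :=
  [&& validL s2, all (fun i => i < size GL_z)%N w &
      mulz 7 (beta_rows s) a == mulz 7 (wordz 7 GL_z w) (beta_rows s2)].

Definition J_target_ok (a : zmx) (s2 : seq bool) (t t2 : nat * nat * bool) : bool :=
  [&& s2 == jstr t2, t2 \in jlabs & V_compb a (jform t) (jform t2)].

Definition J_step_ok (a : zmx) (s s2 : seq bool) : bool :=
  all (fun t => (s == jstr t) ==> J_target_ok a s2 t (jlab_image a t)) jlabs.

Definition gamma1_step_ok (c : qcert) (l l2 : lab) : bool :=
  match gamma1 l, gamma1 l2 with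
  | inl s, inl s2 => L_step_ok (qimg c) (nth [::] (qwords c) (sigma_index s)) s s2
  | inr s, inr s2 => J_step_ok (qimg c) s s2
  | _, _ => false
  end.

Definition lab_step_ok (c : qcert) (l : lab) : bool :=
  let l2 := lab_image c l in
  [&& l2 \in labs, W_compb c (lab_form l) (lab_form l2),
      inO1 l ==> inO1 l2, inO2 l ==> inO2 l2, inO3 l ==> inO3 l2 &
      gamma1_step_ok c l l2].

Definition qcert_ok (c : qcert) : bool :=
  [&& qden c != 0, mulz 8 (qmx c) (qmx c) == mscalez 8 (qden c * qden c) (idz 8),
      mulz 7 (qimg c) (qimg c) == idz 7, W_compb c W_form W_form,
      V_compb (qimg c) V_form V_form & all (lab_step_ok c) labs].

Lemma Q_certs_ok : all qcert_ok Q_certs.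
Proof. by vm_compute. Qed.

Fixpoint bool_seqs (n : nat) : seq (seq bool) :=
  if n is n'.+1 then [seq b :: s | b <- [:: true; false], s <- bool_seqs n'] else [:: [::]].

Lemma mem_bool_seqs s : s \in bool_seqs (size s).
Proof. by elim: s => // b s IH; apply/allpairsP; exists (b, s); case: b. Qed.

Definition gamma1_L_bij (o : pred lab) : bool :=
  all (fun l => o l ==> if gamma1 l is inl t then validL t else false) labs &&
  all (fun t => count (fun l => o l && (gamma1 l == inl t)) labs == 1%N) sigmas.

Definition gamma1_J_bij : bool :=
  all (fun l => inO3 l ==> if gamma1 l is inr s then validJ s else false) labs &&
  all (fun s => validJ s ==> (count (fun l => inO3 l && (gamma1 l == inr s)) labs == 1%N))
    (bool_seqs 6).

Lemma gamma1_bij_ok : [&& gamma1_L_bij inO1, gamma1_L_bij inO2 & gamma1_J_bij].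
Proof. by vm_compute. Qed.

Lemma gamma1_L_bijP (o : pred lab) : gamma1_L_bij o ->
  (forall l, lab_ok l -> o l -> exists t, validL t /\ gamma1 l = inl t) /\
  (forall t, validL t -> exists! l, [/\ lab_ok l, o l & gamma1 l = inl t]).
Proof.
case/andP=> /allP onto /allP count1; split.
  move=> l; rewrite -mem_labs => /onto /implyP h /h.
  by case: (gamma1 l) => // t; exists t.
move=> t /mem_sigmas /count1 /eqP /count1_exists_unique [l [[l_in /andP[ol /eqP gl]] l_uniq]].
exists l; split; first by rewrite -mem_labs.
move=> l' [l'_ok ol' gl']; apply: l_uniq; split; first by rewrite mem_labs.
by rewrite ol' gl' eqxx.
Qed.

Lemma gamma1_J_bijP : gamma1_J_bij ->
  (forall l, lab_ok l -> inO3 l -> exists s, validJ s /\ gamma1 l = inr s) /\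
  (forall s, validJ s -> exists! l, [/\ lab_ok l, inO3 l & gamma1 l = inr s]).
Proof.
case/andP=> /allP onto /allP count1; split.
  move=> l; rewrite -mem_labs => /onto /implyP h /h.
  by case: (gamma1 l) => // s; exists s.
move=> s s_ok; have s_in : s \in bool_seqs 6.
  by case/andP: s_ok => /eqP <- _; apply: mem_bool_seqs.
move: (count1 s s_in); rewrite s_ok => /eqP /count1_exists_unique.
case=> l [[l_in /andP[ol /eqP gl]] l_uniq]; exists l; split; first by rewrite -mem_labs.
move=> l' [l'_ok ol' gl']; apply: l_uniq; split; first by rewrite mem_labs.
by rewrite ol' gl' eqxx.
Qed.

Section Cosets.
Variable F : numClosedFieldType.

Lemma inW_form (w : 'cV[F]_8) : inW w <-> aeval W_form w = 0.
Proof.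
have -> : aeval W_form w = 2 + 3 * w (inord 0) 0 - \sum_(1 <= k < 8) w (inord k) 0.
  by rewrite aeval_expand; do 7!rewrite big_ltn //; rewrite big_geq //=; ring.
by rewrite /inW; split=> [->|/eqP]; [rewrite subrr | rewrite subr_eq0 => /eqP].
Qed.

Lemma xpos_lt k : (xpos k < 8)%N.
Proof. by do 8?case: k => [|k] //; rewrite /xpos /= nth_nil. Qed.

Lemma labval_form l (w : 'cV[F]_8) : labval l w = aeval (lab_form l) w.
Proof.
by case: l => [[[] i] j]; rewrite /= !aeval_sub ?aeval_add ?aeval_cst !aeval_var ?xpos_lt.
Qed.

Definition w0 : 'cV[F]_8 := \col_(i < 8) (w0_vals`_i)%:~R.

Lemma w0_inW : inW w0.
Proof. by apply/inW_form; rewrite aeval_col w0_vals_inW. Qed.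

Lemma labval_w0_inj l1 l2 :
  lab_ok l1 -> lab_ok l2 -> labval l1 w0 = labval l2 w0 -> l1 = l2.
Proof.
rewrite -!mem_labs => l1s l2s; rewrite !labval_form !aeval_col => /intr_inj.
exact: (uniq_map_inj_in lab_at_w0_uniq).
Qed.

Lemma inV_form (x : 'cV[F]_7) : inV x <-> aeval V_form x = 0.
Proof.
have -> : aeval V_form x =
    c7 x 4 + c7 x 5 + c7 x 6 - c7 x 0 - c7 x 1 - c7 x 2 - c7 x 3 - 1.
  by rewrite aeval_expand /c7 /=; ring.
by rewrite /inV; split=> [->|/eqP]; [rewrite subrr | rewrite subr_eq0 => /eqP].
Qed.

Lemma uL_formE bar k (x : 'cV[F]_7) : uL bar k x = map (fun p => aeval p x) (uL_form bar k).
Proof.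
by case: bar; do 7?case: k => [|k];
  rewrite /uL /uL_form /= ?aeval_sub ?aeval_add ?aeval_cst ?aeval_var.
Qed.

Lemma size_uL_form bar k : size (uL_form bar k) = 7%N.
Proof. by case: bar; do 7?case: k => [|k]. Qed.

Lemma aeval_homog p (x : 'cV[F]_7) : inV x -> aeval (0, homog p) x = aeval p x.
Proof.
move=> /inV_form xV; rewrite -[(0, homog p)]/(aadd 7 (0, p.2) (0, scalez 7 p.1 V_form.2)).
rewrite aeval_add aeval_scalez addrC [aeval p x]aeval_pair.
suff -> : aeval (0, V_form.2) x = 1 by rewrite mulr1.
by move/eqP: xV; rewrite aeval_pair addrC addr_eq0 mulrN1z opprK => /eqP.
Qed.

Lemma beta_rows_act s (x : 'cV[F]_7) (i : 'I_7) :
  inV x -> (mxl F 7 (beta_rows s) *m x) i 0 = nth 0 (uL s.1 s.2 x) i.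
Proof.
move=> xV; have i_lt : (i < size (uL_form s.1 s.2))%N by rewrite size_uL_form.
by rewrite mxl_mulmx_row uL_formE !(nth_map (0, [::])) // aeval_homog.
Qed.

Lemma aeval_col_mxl n p P (j : 'I_n) :
  aeval p (col j (mxl F n P)) = (p.1 + (vmulz n p.2 P)`_j)%:~R.
Proof.
rewrite /aeval /vmulz nth_mkseq // sumzE intrD rmorph_sum /=; congr (_ + _).
by apply: eq_bigr => k _; rewrite !mxE intrM.
Qed.

Lemma mx_eq_on_V (M N : 'M[F]_7) : (forall x, inV x -> M *m x = N *m x) -> M = N.
Proof.
move=> eqMN; have eqMN_frame : M * mxl F 7 V_frame = N * mxl F 7 V_frame.
  have colM (A : 'M[F]_7) i j :
      (A *m mxl F 7 V_frame) i j = (A *m col j (mxl F 7 V_frame)) i 0.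
    by rewrite colE mulmxA -colE [RHS]mxE.
  apply/matrixP => i j; rewrite -!mulmxE !colM eqMN //.
  apply/inV_form; rewrite aeval_col_mxl; apply/eqP.
  by rewrite intr_eq0; have /allP/(_ j) := V_frame_cols; rewrite mem_iota /=; apply.
have frameK : mxl F 7 V_frame * mxl F 7 V_frame_inv = 1 by rewrite mxlM V_frame_invK mxl_id.
by rewrite -[M]mulr1 -[N]mulr1 -frameK !mulrA eqMN_frame.
Qed.

Lemma H1grpE : H1grp (F := F) = gen (map (mxl F 7) H1_z).
Proof. by rewrite /H1grp !trp_tpermz. Qed.

Lemma GLgrpE : GLgrp (F := F) = gen (map (mxl F 7) GL_z).
Proof. by rewrite /GLgrp !trp_tpermz // -[X1 F]/(mxl F 7 X1_z) !mxlM. Qed.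

Lemma H1grp_unit (g : 'M[F]_7) : H1grp g -> g \is a GRing.unit.
Proof.
rewrite H1grpE; apply: gen_unit => _ /mapP[h hH ->]; apply: invol_unit.
by rewrite mxlM (eqP (allP H1_z_invol h hH)) mxl_id.
Qed.

Lemma beta_in_H1 s : validL s -> H1grp (mxl F 7 (beta_rows s)).
Proof.
move/mem_sigmas/(allP beta_rows_words)/andP => [/eqP-> wH].
by rewrite H1grpE; apply: gen_word.
Qed.

Lemma inGL_step a w s s2 (delta : 'M[F]_7) :
  L_step_ok a w s s2 -> inGL delta s.1 s.2 -> inGL (delta * mxl F 7 a) s2.1 s2.2.
Proof.
case/and3P=> s2_ok wGL /eqP beta_a [_ [beta [betaH1 [beta_act delta_beta]]]].
have beta_s : beta = mxl F 7 (beta_rows s).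
  apply: mx_eq_on_V => x xV; apply/matrixP => i j.
  by rewrite ord1 beta_act // beta_rows_act.
split=> //; exists (mxl F 7 (beta_rows s2)); split; first exact: beta_in_H1.
split; first by move=> x xV i; apply: beta_rows_act.
have beta2_u := H1grp_unit (beta_in_H1 s2_ok).
have -> : delta * mxl F 7 a * (mxl F 7 (beta_rows s2))^-1 =
    (delta * beta^-1) * (beta * mxl F 7 a * (mxl F 7 (beta_rows s2))^-1).
  by rewrite !mulrA mulrVK // H1grp_unit.
have word_GL : GLgrp (mxl F 7 (wordz 7 GL_z w)) by rewrite GLgrpE; apply: gen_word.
by rewrite {2}beta_s mxlM beta_a -mxlM mulrK //; apply: gen_mul delta_beta word_GL.
Qed.

Lemma jform_eval r q sg (x : 'cV[F]_7) : (r < 4)%N -> (q < 4)%N ->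
  (if sg then 1 + Acoord x r - Ecoord x q else Ecoord x q - Acoord x r) =
  aeval (jform (r, q, sg)) x.
Proof.
move=> r4 q4; have r7 : (r < 7)%N by apply: ltn_trans r4 _.
have q7 : (q + 3 < 7)%N by rewrite -[7%N]/(4 + 3)%N ltn_add2r.
rewrite /Acoord /Ecoord /jform /eform.
by case: eqP => _; case: sg; rewrite ?aeval_sub ?aeval_add ?aeval_cst ?aeval_var.
Qed.

Lemma inGJ_step a s s2 (delta : 'M[F]_7) :
  (forall x, inV x -> inV (mxl F 7 a *m x)) ->
  J_step_ok a s s2 -> inGJ delta s -> inGJ (delta * mxl F 7 a) s2.
Proof.
move=> aV /allP J_ok [r [q [sg [r4 q4 s_rq delta_form]]]].
have rq_in : (r, q, sg) \in jlabs by rewrite mem_jlabs r4 q4.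
have /implyP/(_ (introT eqP s_rq)) := J_ok _ rq_in.
case: (jlab_image a (r, q, sg)) => [[r2 q2] sg2] /and3P[/eqP s2_eq].
rewrite mem_jlabs => /andP[r2_4 q2_4] form_eq.
exists r2, q2, sg2; split=> // x xV.
rewrite -mulmxA delta_form; last exact: aV.
transitivity (aeval (jform (r2, q2, sg2)) x); last by symmetry; apply: jform_eval.
rewrite -(aform_compb1P form_eq) ?(iffLR (inV_form x)) //.
exact: jform_eval.
Qed.

(* Used with [a = alpha^-1] and [b = (m alpha)^-1]. *)
Definition moves (a : 'M[F]_8) (b : 'M[F]_7) (l l2 : lab) : Prop :=
  [/\ l2 \in labs,
      forall w, inW w -> labval l (a *m w) = labval l2 w,
      [/\ inO1 l -> inO1 l2, inO2 l -> inO2 l2 & inO3 l -> inO3 l2] &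
      forall delta, inT delta (gamma1 l) -> inT (delta * b) (gamma1 l2)].

Lemma moves_trans a b a' b' l l1 l2 : (forall w, inW w -> inW (a' *m w)) ->
  moves a b l l1 -> moves a' b' l1 l2 -> moves (a * a') (b * b') l l2.
Proof.
move=> a'W [_ val1 [o1 o2 o3] gam1] [l2_in val2 [p1 p2 p3] gam2]; split=> //.
- by move=> w wW; rewrite -mulmxE -mulmxA val1 ?val2 //; apply: a'W.
- by split=> h; [exact/p1/o1 | exact/p2/o2 | exact/p3/o3].
- by move=> delta /gam1/gam2; rewrite mulrA.
Qed.

Definition qgen (c : qcert) : 'M[F]_8 := ((qden c)%:~R)^-1 *: mxl F 8 (qmx c).

Lemma qcert_spec c : qcert_ok c ->
  [/\ qgen c * qgen c = 1, mxl F 7 (qimg c) * mxl F 7 (qimg c) = 1,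
      forall w, inW w -> inW (qgen c *m w) &
      forall l, l \in labs -> moves (qgen c) (mxl F 7 (qimg c)) l (lab_image c l)].
Proof.
case/and5P=> d0 /eqP sq /eqP sq' W_ok /andP[V_ok /allP steps].
have aV x : inV x -> inV (mxl F 7 (qimg c) *m x).
  by move/inV_form=> xV; apply/inV_form; rewrite (aform_compb1P V_ok).
split.
- have dF : (qden c)%:~R != 0 :> F by rewrite intr_eq0.
  rewrite /qgen -scalerAl -scalerAr scalerA mxlM sq mxl_scale mxl_id scalerA intrM.
  by rewrite mulrACA mulVf // mul1r scale1r.
- by rewrite mxlM sq' mxl_id.
- by move=> w /inW_form wW; apply/inW_form; rewrite (aform_compbP d0 W_ok).
move=> l /steps /and5P[l2_in form_ok o1 o2 /andP[o3 g_ok]]; split=> //.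
- by move=> w /inW_form wW; rewrite !labval_form (aform_compbP d0 form_ok).
- by split; apply/implyP.
move: g_ok; rewrite /gamma1_step_ok.
case: (gamma1 l) => [[b k]|s]; case: (gamma1 (lab_image c l)) => [[b2 k2]|s2] //.
  by move=> step delta; apply: (inGL_step (s := (b, k)) (s2 := (b2, k2)) step).
by move=> step delta; apply: inGJ_step.
Qed.

Section Equivariance.
Variable m : 'M[F]_8 -> 'M[F]_7.
Hypotheses (m_mul : forall a b, Qgrp a -> Qgrp b -> m (a * b) = m a * m b)
  (m_s1 : m (s1 F) = a5 F) (m_s2 : m (s2 F) = a4 F) (m_s3 : m (s3 F) = a3 F)
  (m_s4 : m (s4 F) = a2 F) (m_s5 : m (s5 F) = a1 F) (m_s3' : m (s3' F) = a1' F).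

Definition Q_gens : seq 'M[F]_8 := [:: s1 F; s2 F; s3 F; s4 F; s5 F; s3' F].

Lemma Q_gens_certified :
  map (fun x => (x, m x)) Q_gens = map (fun c => (qgen c, mxl F 7 (qimg c))) Q_certs.
Proof.
rewrite /= m_s1 m_s2 m_s3 m_s4 m_s5 m_s3' /qgen /= !mulr1z !invr1 !scale1r.
rewrite /s1 /s2 /s3 /s4 /s5 /a5 /a4 /a2 /a1 /a1' !trp_tpermz //.
by rewrite -[Ym F]/(mxl F 8 Y_z) mxlM.
Qed.

Lemma Q_gen_spec x : x \in Q_gens ->
  exists2 c, qcert_ok c & x = qgen c /\ m x = mxl F 7 (qimg c).
Proof.
move=> xQ; have : (x, m x) \in map (fun c => (qgen c, mxl F 7 (qimg c))) Q_certs.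
  by rewrite -Q_gens_certified; apply: (map_f (fun x => (x, m x))).
by case/mapP=> c c_in [-> ->]; exists c => //; apply: (allP Q_certs_ok).
Qed.

Lemma m1 : m 1 = 1.
Proof.
have s2Q : s2 F \in Q_gens by rewrite !inE eqxx orbT.
have [c c_ok [xE mxE]] := Q_gen_spec s2Q.
have [xx aa _ _] := qcert_spec c_ok.
have Qs2 : Qgrp (s2 F) by rewrite -[s2 F]mulr1; apply/genM/gen1.
by rewrite -xx -xE m_mul // mxE aa.
Qed.

Definition Q_equivariant (alpha : 'M[F]_8) : Prop :=
  [/\ alpha \is a GRing.unit, m alpha \is a GRing.unit,
      forall w, inW w -> inW (alpha^-1 *m w) &
      forall l, l \in labs -> exists l2, moves alpha^-1 (m alpha)^-1 l l2].

Lemma Q_equivariantP alpha : Qgrp alpha -> Q_equivariant alpha.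
Proof.
apply: gen_invol_ind.
- move=> x /Q_gen_spec[c c_ok [-> _]].
  by have [] := qcert_spec c_ok.
- split; [exact: unitr1 | by rewrite m1 unitr1 | by move=> w; rewrite invr1 mul1mx |].
  move=> l l_in; exists l; split=> //; first by move=> w _; rewrite invr1 mul1mx.
  by move=> delta; rewrite m1 invr1 mulr1.
move=> x g xQ gQ [g_u mg_u gW g_moves].
have [c c_ok [xE mxE]] := Q_gen_spec xQ.
have [xx aa xW x_moves] := qcert_spec c_ok.
rewrite -{}xE in xx xW x_moves; rewrite -{}mxE in aa x_moves.
have Qx : Qgrp x by rewrite -[x]mulr1; apply/genM/gen1.
have [x_u mx_u] := (invol_unit xx, invol_unit aa).
rewrite /Q_equivariant m_mul // !invrM // (invol_inv xx) (invol_inv aa); split.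
- by rewrite unitrMl.
- by rewrite unitrMl.
- by move=> w wW; rewrite -mulmxE -mulmxA; apply/gW/xW.
move=> l /g_moves[l1 l1_moves]; exists (lab_image c l1).
have [l1_in _ _ _] := l1_moves.
by apply: moves_trans xW l1_moves (x_moves _ l1_in).
Qed.

Lemma Q_label_moves alpha beta l l' : Qgrp alpha ->
  labG beta l -> labG (beta * alpha^-1) l' -> moves alpha^-1 (m alpha)^-1 l l'.
Proof.
move=> aQ [l_ok beta_l] [l'_ok beta_l'].
have [_ _ aW a_moves] := Q_equivariantP aQ.
have [l2 l2_moves] := a_moves l (etrans (mem_labs l) l_ok).
suff -> : l' = l2 by [].
case: l2_moves => l2_in l2_val _ _; have w0W := w0_inW.
apply: labval_w0_inj => //; first by rewrite -mem_labs.
by rewrite -beta_l' // -mulmxE -mulmxA (beta_l _ (aW _ w0W)) l2_val.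
Qed.

End Equivariance.
End Cosets.

Unset Implicit Arguments.

Theorem theorem5p5 (F : numClosedFieldType) (m : 'M[F]_8 -> 'M[F]_7) :
  (forall a b, Qgrp a -> Qgrp b -> m (a * b) = m a * m b) ->
  m (s1 F) = a5 F -> m (s2 F) = a4 F -> m (s3 F) = a3 F ->
  m (s4 F) = a2 F -> m (s5 F) = a1 F -> m (s3' F) = a1' F ->
  (* gamma1 (alpha . tau) = m(alpha) . gamma1(tau) *)
  (forall (alpha beta : 'M[F]_8) (l l' : lab) (delta : 'M[F]_7),
      Qgrp alpha -> Hgrp beta -> labG beta l -> labG (beta * alpha^-1) l' ->
      H1grp delta -> inT delta (gamma1 l) ->
      inT (delta * (m alpha)^-1) (gamma1 l'))
  /\ (* Q preserves O1, O2, O3 *)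
  (forall (alpha beta : 'M[F]_8) (l l' : lab),
      Qgrp alpha -> Hgrp beta -> labG beta l -> labG (beta * alpha^-1) l' ->
      [/\ inO1 l -> inO1 l', inO2 l -> inO2 l' & inO3 l -> inO3 l'])
  /\ (* gamma1 is a bijection O1 -> G_L\H1, O2 -> G_L\H1, O3 -> G_J\H1 *)
  (forall l, lab_ok l -> inO1 l ->
      exists t, validL t /\ gamma1 l = inl t)
  /\ (forall t, validL t -> exists! l, [/\ lab_ok l, inO1 l & gamma1 l = inl t])
  /\ (forall l, lab_ok l -> inO2 l ->
      exists t, validL t /\ gamma1 l = inl t)
  /\ (forall t, validL t -> exists! l, [/\ lab_ok l, inO2 l & gamma1 l = inl t])
  /\ (forall l, lab_ok l -> inO3 l ->
      exists s, validJ s /\ gamma1 l = inr s)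
  /\ (forall s, validJ s -> exists! l, [/\ lab_ok l, inO3 l & gamma1 l = inr s]).
Proof.
move=> m_mul m_s1 m_s2 m_s3 m_s4 m_s5 m_s3'.
have label_moves := Q_label_moves m_mul m_s1 m_s2 m_s3 m_s4 m_s5 m_s3'.
case/and3P: gamma1_bij_ok => /gamma1_L_bijP[O1_to O1_bij] /gamma1_L_bijP[O2_to O2_bij].
case/gamma1_J_bijP=> O3_to O3_bij.
split.
  move=> alpha beta l l' delta alphaQ _ beta_l beta_l' _.
  by have [_ _ _] := label_moves _ _ _ _ alphaQ beta_l beta_l'; apply.
split.
  move=> alpha beta l l' alphaQ _ beta_l beta_l'.
  by case: (label_moves _ _ _ _ alphaQ beta_l beta_l').
by do !split.
Qed.
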